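(* For every positive integer $r$ there is a ReLU network $f_s^r:\mathbb{R}\to\mathbb{R}$ all of whose weights lie in $\{\frac12,-\frac12\}$ such that: (i) $f_s^r(0)=0$; (ii) $\sup_{x\in[0,1]}|f_s^r(x)-x^2|\le 2^{-2(r+1)}$; (iii) its depth is $\mathcal{O}(r)$; (iv) its width is bounded by a constant independent of $r$; (v) its number of weights is $\mathcal{O}(r)$.
   Context: A ReLU network is a feedforward network with activation $\sigma(x)=\max(0,x)$ in which each unit connects only to units in the next layer; depth is the number of layers and width the maximum number of units in a layer. *)

From HB Require Import structures.
From mathcomp Require Import all_boot all_order all_algebra.
Set Implicit Arguments. Unset Strict Implicit. Unset Printing Implicit Defensive.
Import Order.TTheory GRing.Theory Num.Theory.
Local Open Scope ring_scope.

(* A zero entry of W / b means "no connection / no bias" (not a weight). *)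
Inductive relu_net (R : Type) : nat -> nat -> Type :=
| NOut (m n : nat) (W : 'M[R]_(n, m)) (b : 'cV[R]_n) : relu_net R m n
| NHid (m k n : nat) (W : 'M[R]_(k, m)) (b : 'cV[R]_k) (N : relu_net R k n)
    : relu_net R m n.

Section Nets.
Variable R : realDomainType.

Definition relu (x : R) : R := Num.max x 0.
Definition relu_vec (k : nat) (v : 'cV[R]_k) : 'cV[R]_k := map_mx relu v.

Fixpoint net_eval (m n : nat) (N : relu_net R m n) : 'cV[R]_m -> 'cV[R]_n :=
  match N with
  | NOut _ _ W b => fun x => W *m x + b
  | NHid _ _ _ W b N' => fun x => net_eval N' (relu_vec (W *m x + b))
  end.

Definition net_fun (N : relu_net R 1 1) (x : R) : R := net_eval N (x%:M) 0 0.

Fixpoint depth (m n : nat) (N : relu_net R m n) : nat :=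
  match N with
  | NOut _ _ _ _ => 1
  | NHid _ _ _ _ _ N' => (depth N').+1
  end.

Fixpoint width (m n : nat) (N : relu_net R m n) : nat :=
  match N with
  | NOut m n _ _ => maxn m n
  | NHid m k _ _ _ N' => maxn m (width N')
  end.

Definition nnz_mx (p q : nat) (A : 'M[R]_(p, q)) : nat :=
  #|[set ij : 'I_p * 'I_q | A ij.1 ij.2 != 0]|.

Fixpoint num_weights (m n : nat) (N : relu_net R m n) : nat :=
  match N with
  | NOut _ _ W b => nnz_mx W + nnz_mx b
  | NHid _ _ _ W b N' => nnz_mx W + nnz_mx b + num_weights N'
  end.

Definition half_param (x : R) : bool := [|| x == 0, x == 2^-1 | x == - 2^-1].

Definition mx_half (p q : nat) (A : 'M[R]_(p, q)) : bool :=
  [forall i, forall j, half_param (A i j)].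

Fixpoint weights_in_half (m n : nat) (N : relu_net R m n) : bool :=
  match N with
  | NOut _ _ W b => mx_half W && mx_half b
  | NHid _ _ _ W b N' => [&& mx_half W, mx_half b & weights_in_half N']
  end.

End Nets.

From mathcomp Require Import all_boot all_order all_algebra.
From mathcomp Require Import reals.
From mathcomp Require Import ring lra zify.
Set Implicit Arguments. Unset Strict Implicit. Unset Printing Implicit Defensive.
Import Order.TTheory GRing.Theory Num.Theory.
Local Open Scope ring_scope.

(* Yarotsky's construction.  The tent map g y = 2 y - 4 relu (y - 1/2) maps
   [0, 1] into itself, and the hump H y = y - y^2 satisfies
   H (g y) = 4 H y - g y.  Hence the two-layer block (y, b) |-> (g y, 4 b - g y)
   sends (y, H y + c) to (g y, H (g y) + 4 c): starting from
   (x, x) = (x, H x + x^2), r blocks produce b = H (g^r x) + 4^r x^2, and 2 r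
   halving layers turn b into x^2 + H (g^r x) / 4^r, which is within 4^-(r+1)
   of x^2 because 0 <= H <= 1/4.  Since every weight is +-1/2, the
   coefficients 1, 2 and 4 are obtained by summing over several copies of each
   unit (two copies of y and of b, four or eight of each hidden unit); this
   keeps the width at 20 and the depth at 4 r + 3. *)

Local Notation cst := const_mx.

Lemma mul_const_mx (R : pzSemiRingType) m n p (a c : R) :
  (cst a : 'M[R]_(m, n)) *m (cst c : 'M[R]_(n, p)) = cst (a * c *+ n).
Proof.
apply/matrixP => i j; rewrite !mxE.
under eq_bigr do rewrite !mxE.
by rewrite sumr_const card_ord.
Qed.

Lemma add_const_mx (V : nmodType) m n (a c : V) :
  (cst a : 'M[V]_(m, n)) + cst c = cst (a + c).
Proof. by rewrite raddfD. Qed.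

Lemma scalar_mx1_const (R : pzRingType) (x : R) : (x%:M : 'M[R]_1) = cst x.
Proof. by apply/matrixP => i j; rewrite !mxE !ord1 eqxx. Qed.

Section ReluNets.
Variable R : realDomainType.

Lemma ger0_relu (a : R) : 0 <= a -> relu a = a.
Proof. by move=> a_ge0; apply/max_idPl. Qed.

Lemma ler0_relu (a : R) : a <= 0 -> relu a = 0.
Proof. by move=> a_le0; apply/max_idPr. Qed.

Lemma relu_vec_const k (a : R) : relu_vec (cst a : 'cV_k) = cst (relu a).
Proof. exact: map_const_mx. Qed.

Lemma width_ge_inputs m n (N : relu_net R m n) : (m <= width N)%N.
Proof. by case: N => [? ? ? ?|? ? ? ? ? ?] /=; rewrite leq_maxl. Qed.

Lemma nnz_mx_le p q (A : 'M[R]_(p, q)) : (nnz_mx A <= p * q)%N.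
Proof. by apply: leq_trans (max_card _) _; rewrite card_prod !card_ord. Qed.

Lemma nnz_layer_le w k m (W : 'M[R]_(k, m)) (b : 'cV[R]_k) :
  (k <= w)%N -> (m <= w)%N -> (nnz_mx W + nnz_mx b <= w * w.+1)%N.
Proof.
move=> le_kw le_mw; rewrite mulnS addnC.
apply: leq_add; apply: leq_trans (nnz_mx_le _) _; first by rewrite muln1.
exact: leq_mul.
Qed.

Lemma num_weights_le m n (N : relu_net R m n) :
  (num_weights N <= depth N * (width N * (width N).+1))%N.
Proof.
elim: N => [{}m {}n W b|{}m k {}n W b N IH] /=.
  by rewrite mul1n nnz_layer_le ?leq_maxl ?leq_maxr.
set w := maxn m (width N); have le_Nw : (width N <= w)%N by rewrite leq_maxr.
rewrite mulSn leq_add ?nnz_layer_le ?leq_maxl //.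
  exact: leq_trans (width_ge_inputs N) le_Nw.
by apply: leq_trans IH _; rewrite leq_mul2l leq_mul ?ltnS ?orbT.
Qed.

Lemma half_param0 : half_param (0 : R).
Proof. by rewrite /half_param eqxx. Qed.

Lemma half_paramV2 : half_param (2^-1 : R).
Proof. by rewrite /half_param eqxx orbT. Qed.

Lemma half_paramNV2 : half_param (- 2^-1 : R).
Proof. by rewrite /half_param eqxx !orbT. Qed.

Lemma mx_half_const p q (a : R) :
  mx_half (cst a : 'M[R]_(p.+1, q.+1)) = half_param a.
Proof.
apply/forallP/idP => [/(_ ord0)/forallP/(_ ord0)|a_half i]; first by rewrite mxE.
by apply/forallP => j; rewrite mxE.
Qed.

Lemma mx_half_col p1 p2 q (A : 'M[R]_(p1, q)) (B : 'M[R]_(p2, q)) :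
  mx_half (col_mx A B) = mx_half A && mx_half B.
Proof.
apply/forallP/andP => [hAB|[/forallP hA /forallP hB] i].
  split; apply/forallP => i; apply/forallP => j.
    by have /forallP/(_ j) := hAB (lshift _ i); rewrite col_mxEu.
  by have /forallP/(_ j) := hAB (rshift _ i); rewrite col_mxEd.
apply/forallP => j; rewrite -[i]splitK; case: split => k /=.
  by rewrite col_mxEu; apply: (forallP (hA k)).
by rewrite col_mxEd; apply: (forallP (hB k)).
Qed.

Lemma mx_half_row p q1 q2 (A : 'M[R]_(p, q1)) (B : 'M[R]_(p, q2)) :
  mx_half (row_mx A B) = mx_half A && mx_half B.
Proof.
apply/forallP/andP => [hAB|[/forallP hA /forallP hB] i].
  split; apply/forallP => i; apply/forallP => j.
    by have /forallP/(_ (lshift _ j)) := hAB i; rewrite row_mxEl.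
  by have /forallP/(_ (rshift _ j)) := hAB i; rewrite row_mxEr.
apply/forallP => j; rewrite -[j]splitK; case: split => k /=.
  by rewrite row_mxEl; apply: (forallP (hA i)).
by rewrite row_mxEr; apply: (forallP (hB i)).
Qed.

End ReluNets.

Section TentMap.
Variable R : realFieldType.

Definition tent (y : R) : R := 2 * y - 4 * relu (y - 2^-1).

Definition hump (y : R) : R := y - y ^+ 2.

Lemma tent_itv (y : R) : 0 <= y <= 1 -> 0 <= tent y <= 1.
Proof.
rewrite /tent => /andP [y_ge0 y_le1].
by have [?|?] := lerP (y - 2^-1) 0; [rewrite ler0_relu | rewrite ger0_relu]; lra.
Qed.

Lemma hump_tent (y : R) : hump (tent y) = 4 * hump y - tent y.
Proof.
rewrite /hump /tent.
by have [?|?] := lerP (y - 2^-1) 0; [rewrite ler0_relu | rewrite ger0_relu ?ltW];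
  rewrite ?expr2; lra.
Qed.

Lemma hump_ge0 (y : R) : 0 <= y <= 1 -> 0 <= hump y.
Proof. by rewrite /hump expr2 => /andP [? ?]; nra. Qed.

Lemma hump_le_quarter (y : R) : hump y <= 4^-1.
Proof.
rewrite /hump; have : 0 <= (y - 2^-1) ^+ 2 := sqr_ge0 _.
by rewrite !expr2; lra.
Qed.

Lemma iter_tent_itv k (y : R) : 0 <= y <= 1 -> 0 <= iter k tent y <= 1.
Proof. by move=> y01; elim: k => [|k IH] //=; apply: tent_itv. Qed.

Lemma iter_tent0 k : iter k tent 0 = 0 :> R.
Proof.
elim: k => [|k /= ->] //.
by rewrite /tent ler0_relu ?mulr0 ?subr0 // sub0r oppr_le0 invr_ge0 ler0n.
Qed.

End TentMap.

Arguments tent {R}.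
Arguments hump {R}.

Section SquareNet.
Variable R : realFieldType.
Local Notation h := (2^-1 : R).

Definition state (y b : R) : 'cV[R]_(2 + 2) := col_mx (cst y) (cst b).

Definition tent_W1 : 'M[R]_(4 + (8 + 8), 2 + 2) :=
  col_mx (row_mx (cst h) (cst 0))
         (col_mx (row_mx (cst h) (cst 0)) (row_mx (cst 0) (cst h))).

Definition tent_b1 : 'cV[R]_(4 + (8 + 8)) :=
  col_mx (cst 0) (col_mx (cst (- h)) (cst 0)).

Definition tent_W2 : 'M[R]_(2 + 2, 4 + (8 + 8)) :=
  col_mx (row_mx (cst h) (row_mx (cst (- h)) (cst 0)))
         (row_mx (cst (- h)) (row_mx (cst h) (cst h))).

Definition block n (N : relu_net R (2 + 2) n) : relu_net R (2 + 2) n :=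
  NHid tent_W1 tent_b1 (NHid tent_W2 (cst 0) N).

Lemma tent_layer1E (y b : R) : 0 <= y -> 0 <= b ->
  relu_vec (tent_W1 *m state y b + tent_b1)
  = col_mx (cst y) (col_mx (cst (relu (y - h))) (cst b)).
Proof.
move=> y_ge0 b_ge0.
rewrite !mul_col_mx !mul_row_col !mul_const_mx !add_const_mx.
rewrite !add_col_mx !add_const_mx.
rewrite /relu_vec !map_col_mx !map_const_mx.
by congr (col_mx (cst _) (col_mx (cst (relu _)) (cst _))); rewrite ?ger0_relu; lra.
Qed.

Lemma tent_layer2E (y b : R) : 0 <= y <= 1 -> tent y <= 4 * b ->
  relu_vec (tent_W2 *m col_mx (cst y) (col_mx (cst (relu (y - h))) (cst b))
            + cst 0)
  = state (tent y) (4 * b - tent y).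
Proof.
move=> /tent_itv /andP [t_ge0 _] le_t_4b; rewrite -(@col_mx_const _ 2 2).
rewrite !mul_col_mx !mul_row_col !mul_const_mx !add_const_mx.
rewrite !add_col_mx !add_const_mx.
rewrite /relu_vec !map_col_mx !map_const_mx /tent in t_ge0 le_t_4b *.
by congr (col_mx (cst _) (cst _)); rewrite ger0_relu; lra.
Qed.

Lemma blockE n (N : relu_net R (2 + 2) n) (y c : R) : 0 <= y <= 1 -> 0 <= c ->
  net_eval (block N) (state y (hump y + c))
  = net_eval N (state (tent y) (hump (tent y) + 4 * c)).
Proof.
move=> y01 c_ge0; have /andP [y_ge0 _] := y01.
have hump_ge0y := hump_ge0 y01; have hump_ge0t := hump_ge0 (tent_itv y01).
rewrite /= tent_layer1E ?(addr_ge0 hump_ge0y c_ge0) // tent_layer2E //.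
  by rewrite hump_tent; congr (net_eval N (state _ _)); lra.
by move: hump_ge0t; rewrite hump_tent; lra.
Qed.

Lemma iter_blockE n (N : relu_net R (2 + 2) n) k (y c : R) :
  0 <= y <= 1 -> 0 <= c ->
  net_eval (iter k (@block n) N) (state y (hump y + c))
  = net_eval N (state (iter k tent y) (hump (iter k tent y) + 4 ^+ k * c)).
Proof.
elim: k y c => [|k IH] y c y01 c_ge0; first by rewrite expr0 mul1r.
rewrite iterS blockE // IH ?tent_itv ?mulr_ge0 ?ler0n //.
by rewrite -iterSr exprSr mulrA.
Qed.

Definition input_layers n (N : relu_net R (2 + 2) n) : relu_net R 1 n :=
  NHid (cst h : 'M_(4, 1)) (cst 0) (NHid (cst h : 'M_(2 + 2, 4)) (cst 0) N).

Lemma input_layersE n (N : relu_net R (2 + 2) n) (x : R) : 0 <= x ->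
  net_eval (input_layers N) x%:M = net_eval N (state x x).
Proof.
move=> x_ge0.
rewrite /= scalar_mx1_const !(mul_const_mx, add_const_mx, relu_vec_const).
rewrite /state col_mx_const; congr (net_eval N (cst _)).
by rewrite !ger0_relu; lra.
Qed.

Fixpoint halving k : relu_net R 1 1 :=
  if k is k'.+1 then NHid (cst h) (cst 0) (halving k') else NOut (cst h) (cst 0).

Lemma halvingE k (p : R) : 0 <= p ->
  net_eval (halving k) (cst p) = cst (p / 2 ^+ k.+1).
Proof.
elim: k p => [|k IH] p p_ge0 /=; rewrite mul_const_mx add_const_mx.
  by congr cst; rewrite expr1; lra.
have half_ge0 : 0 <= 2^-1 * p *+ 1 + 0 by lra.
rewrite relu_vec_const ger0_relu // IH //.
by congr cst; rewrite [2 ^+ k.+2]exprS invfM; lra.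
Qed.

Definition readout k : relu_net R (2 + 2) 1 :=
  NHid (row_mx (cst 0) (cst h) : 'M_(1, 2 + 2)) (cst 0) (halving k).

Lemma readoutE k (y b : R) : 0 <= b ->
  net_eval (readout k) (state y b) = cst (b / 2 ^+ k.+1).
Proof.
move=> b_ge0; rewrite /= mul_row_col !mul_const_mx !add_const_mx relu_vec_const.
by rewrite -halvingE //; congr (net_eval _ (cst _)); rewrite ger0_relu; lra.
Qed.

Definition square_net k : relu_net R 1 1 :=
  input_layers (iter k.+1 (@block 1) (readout (2 * k).+1)).

Lemma square_netE k (x : R) : 0 <= x <= 1 ->
  net_fun (square_net k) x = x ^+ 2 + hump (iter k.+1 tent x) / 4 ^+ k.+1.
Proof.
move=> x01; have /andP [x_ge0 _] := x01; have t01 := iter_tent_itv k.+1 x01.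
rewrite /net_fun /square_net input_layersE //.
have -> : state x x = state x (hump x + x ^+ 2) by rewrite /hump subrK.
rewrite iter_blockE ?sqr_ge0 // readoutE ?mxE; last first.
  by rewrite addr_ge0 ?mulr_ge0 ?exprn_ge0 ?sqr_ge0 ?hump_ge0.
have -> : 2 ^+ (2 * k).+2 = 4 ^+ k.+1 :> R.
  by rewrite -[(2 * k).+2]/(2 + 2 * k)%N -mulnS exprM; congr (_ ^+ _); ring.
by field; rewrite expf_neq0 ?pnatr_eq0.
Qed.

Lemma weights_in_half_block n (N : relu_net R (2 + 2) n) :
  weights_in_half (block N) = weights_in_half N.
Proof.
by rewrite /= !(mx_half_col, mx_half_row, mx_half_const)
  !(half_param0, half_paramV2, half_paramNV2) /=.
Qed.

Lemma weights_in_half_iter_block n (N : relu_net R (2 + 2) n) k :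
  weights_in_half (iter k (@block n) N) = weights_in_half N.
Proof. by elim: k => [|k IH] //; rewrite iterS weights_in_half_block. Qed.

Lemma weights_in_half_input_layers n (N : relu_net R (2 + 2) n) :
  weights_in_half (input_layers N) = weights_in_half N.
Proof. by rewrite /= !mx_half_const half_param0 half_paramV2. Qed.

Lemma weights_in_half_halving k : weights_in_half (halving k).
Proof.
by elim: k => [|k IH] /=; rewrite ?IH !mx_half_const half_param0 half_paramV2.
Qed.

Lemma weights_in_half_square_net k : weights_in_half (square_net k).
Proof.
rewrite weights_in_half_input_layers weights_in_half_iter_block /=.
rewrite mx_half_row !mx_half_const half_param0 half_paramV2.
exact: weights_in_half_halving.
Qed.

Lemma depth_iter_block n (N : relu_net R (2 + 2) n) k :
  depth (iter k (@block n) N) = (2 * k + depth N)%N.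
Proof. by elim: k => [|k IH] //; rewrite iterS /= IH; lia. Qed.

Lemma depth_halving k : depth (halving k) = k.+1.
Proof. by elim: k => [|k /= ->]. Qed.

Lemma depth_square_net k : depth (square_net k) = (4 * k + 7)%N.
Proof. by rewrite /= depth_iter_block /= depth_halving; lia. Qed.

Lemma width_iter_block n (N : relu_net R (2 + 2) n) k :
  (width N <= 20)%N -> (width (iter k (@block n) N) <= 20)%N.
Proof.
by move=> le_N20; elim: k => [|k IH] //; rewrite iterS /= !geq_max IH.
Qed.

Lemma width_halving k : width (halving k) = 1%N.
Proof. by elim: k => [|k /= ->]. Qed.

Lemma width_square_net k : (width (square_net k) <= 20)%N.
Proof. by rewrite /= !geq_max /= width_iter_block //= width_halving. Qed.

End SquareNet.

Theorem proposition1 (R : realType) :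
  exists (Cd Cw Cn : nat),
  forall r : nat, (0 < r)%N ->
  exists N : relu_net R 1 1,
    weights_in_half N /\
    net_fun N 0 = 0 /\
    (forall x : R, 0 <= x <= 1 ->
       `|net_fun N x - x ^+ 2| <= (2 : R) ^- (2 * (r + 1))) /\
    (depth N <= Cd * r)%N /\
    (width N <= Cw)%N /\
    (num_weights N <= Cn * r)%N.
Proof.
exists 7%N, 20%N, (7 * (20 * 21))%N => -[//|k] _.
exists (square_net R k); split; first exact: weights_in_half_square_net.
split.
  rewrite square_netE ?lexx ?ler01 // iter_tent0 /hump.
  by rewrite expr2 !mulr0 subrr mul0r addr0.
split.
  move=> x x01; rewrite square_netE // addrAC subrr add0r.
  have t_ge0 := hump_ge0 (iter_tent_itv k.+1 x01).
  have t_le := hump_le_quarter (iter k.+1 tent x).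
  have -> : (2 : R) ^- (2 * (k.+1 + 1)) = 4^-1 / 4 ^+ k.+1.
    by rewrite addn1 exprM -invfM -exprS; congr (_ ^+ _)^-1; ring.
  by rewrite ger0_norm ?ler_wpM2r ?divr_ge0 ?invr_ge0 ?exprn_ge0 ?ler0n.
split; first by rewrite depth_square_net; lia.
split; first exact: width_square_net.
apply: leq_trans (num_weights_le _) _.
have w_le20 := width_square_net R k.
by rewrite depth_square_net mulnAC leq_mul ?leq_mul ?ltnS //; lia.
Qed.
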